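(* Let $n\ge 1$ and let $\varphi$ be a tame automorphism of $\mathbf{C}[x_1,\dots,x_{n+1}]$. For $q\in\mathbf{C}[x_1,\dots,x_n]$, let $\varphi_q$ be the $\mathbf{C}$-algebra endomorphism of $\mathbf{C}[x_1,\dots,x_n]$ sending $x_i$ ($1\le i\le n$) to the polynomial obtained from $\varphi(x_i)$ by substituting $q$ for $x_{n+1}$. Then there exists $q\in\mathbf{C}[x_1,\dots,x_n]$ such that $\varphi_q$ is injective.
   Context: An automorphism of $\mathbf{C}[x_1,\dots,x_N]$ is elementary if it fixes all variables except one, $x_i$, and maps $x_i$ to $x_i + f(x_1,\dots,x_{i-1},x_{i+1},\dots,x_N)$; it is tame if it is a composition of elementary and linear automorphisms. *)

From HB Require Import structures.
From mathcomp Require Import all_boot all_order all_algebra.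
From mathcomp Require Import reals.
From mathcomp.real_closed Require Import complex.
From mathcomp Require Import mpoly.
Set Implicit Arguments. Unset Strict Implicit. Unset Printing Implicit Defensive.
Import GRing.Theory.
Local Open Scope ring_scope.

(* Polynomial endomorphisms of K[x_0..x_{N-1}] (over a commutative ring K),
   represented by the N-tuple of images of the variables:
   phi acts on p by  p |-> p.@(phi) = comp_mpoly phi p. *)
Definition endo (K : comRingType) (N : nat) := N.-tuple {mpoly K[N]}.

Definition endo_id (K : comRingType) (N : nat) : endo K N :=
  [tuple 'X_i | i < N].

Definition endo_comp (K : comRingType) (N : nat) (phi psi : endo K N)
  : endo K N := [tuple comp_mpoly phi (tnth psi i) | i < N].

Definition elementary (K : comRingType) (N : nat) (e : endo K N) : Prop :=
  exists (i : 'I_N) (f : {mpoly K[N]}),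
    (forall m, m \in msupp f -> m i = 0%N) /\
    (forall j, tnth e j = if j == i then 'X_i + f else 'X_j).

Definition linear_aut (K : comUnitRingType) (N : nat) (e : endo K N) : Prop :=
  exists A : 'M[K]_N, A \in unitmx /\
    (forall i, tnth e i = \sum_(j < N) A i j *: 'X_j).

Inductive tame (K : comUnitRingType) (N : nat) : endo K N -> Prop :=
  | tame_id : tame (endo_id K N)
  | tame_elem e phi : elementary e -> tame phi -> tame (endo_comp e phi)
  | tame_lin e phi : linear_aut e -> tame phi -> tame (endo_comp e phi).

(* substitution x_i |-> x_i (i < n), x_{n+1} |-> q *)
Definition subst_last (K : comRingType) (n : nat) (q : {mpoly K[n]})
  : n.+1.-tuple {mpoly K[n]} :=
  [tuple match unlift ord_max j with Some k => 'X_k | None => q end | j < n.+1].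

Definition restrict_q (K : comRingType) (n : nat) (phi : endo K n.+1)
  (q : {mpoly K[n]}) : endo K n :=
  [tuple comp_mpoly (subst_last q) (tnth phi (widen_ord (leqnSn n) i)) | i < n].

From HB Require Import structures.
From mathcomp Require Import all_boot all_order all_algebra.
From mathcomp Require Import reals.
From mathcomp.real_closed Require Import complex.
From mathcomp Require Import mpoly.
Set Implicit Arguments. Unset Strict Implicit. Unset Printing Implicit Defensive.
Import GRing.Theory.
Local Open Scope ring_scope.

(* A tame automorphism phi has a left inverse psi, and this is all the argument
   uses.  Put d = x_{n+1} - q.  If phi_q(p) = 0 then phi(p) vanishes at
   x_{n+1} = q, so phi(p) = r d, and applying psi gives p = psi(r) psi(d).
   As polynomials in x_{n+1} over K[x_1..x_n] the left-hand side is constant,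
   so p = 0 as soon as psi(d) is not constant in x_{n+1}, K being a domain.
   Such a q exists: some psi(x_j) involves x_{n+1}, for otherwise psi would map
   everything into K[x_1..x_n] while psi(phi(x_{n+1})) = x_{n+1}; take q = 0
   if psi(x_{n+1}) itself does, and q = x_j otherwise. *)

Definition congr_mod (A : comPzRingType) (d a b : A) := exists r, a - b = r * d.

Section CongrMod.
Variables (A : comPzRingType) (d : A).

Lemma congr_modxx a : congr_mod d a a.
Proof. by exists 0; rewrite subrr mul0r. Qed.

Lemma congr_modD a1 b1 a2 b2 :
  congr_mod d a1 b1 -> congr_mod d a2 b2 -> congr_mod d (a1 + a2) (b1 + b2).
Proof. by move=> [r1 e1] [r2 e2]; exists (r1 + r2); rewrite opprD addrACA e1 e2 mulrDl. Qed.

Lemma congr_modM a1 b1 a2 b2 :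
  congr_mod d a1 b1 -> congr_mod d a2 b2 -> congr_mod d (a1 * a2) (b1 * b2).
Proof.
move=> [r1 e1] [r2 e2]; exists (r1 * a2 + b1 * r2).
have -> : a1 * a2 - b1 * b2 = (a1 - b1) * a2 + b1 * (a2 - b2).
  by rewrite mulrBl mulrBr addrA subrK.
by rewrite e1 e2 mulrDl mulrAC mulrA.
Qed.

Lemma congr_modXn a b k : congr_mod d a b -> congr_mod d (a ^+ k) (b ^+ k).
Proof.
move=> ab; elim: k => [|k IHk]; first by rewrite !expr0; apply: congr_modxx.
by rewrite !exprS; apply: congr_modM.
Qed.

End CongrMod.

Lemma congr_mod0 (A : comPzRingType) (a b : A) : congr_mod 0 a b -> a = b.
Proof. by move=> [r]; rewrite mulr0 => /eqP; rewrite subr_eq0 => /eqP. Qed.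

Section MPolyRMorph.
Variables (K : comNzRingType) (n : nat) (A : comPzRingType).
Variables (f g : {rmorphism {mpoly K[n]} -> A}).
Hypothesis eq_fgC : forall c, f c%:MP = g c%:MP.

Lemma mpoly_rmorph_congr_mod d :
  (forall i, congr_mod d (f 'X_i) (g 'X_i)) -> forall p, congr_mod d (f p) (g p).
Proof.
move=> congr_fgX; elim/mpolyind => [|c m p _ _ IHp].
  by rewrite !rmorph0; apply: congr_modxx.
rewrite !rmorphD; apply: congr_modD => //.
rewrite -mul_mpolyC !rmorphM eq_fgC; apply: congr_modM; first exact: congr_modxx.
rewrite mpolyXE_id !rmorph_prod.
apply: big_ind2 => [|a1 b1 a2 b2|i _]; first exact: congr_modxx.
  exact: congr_modM.
by rewrite !rmorphXn; apply: congr_modXn.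
Qed.

Lemma mpoly_rmorph_eq : (forall i, f 'X_i = g 'X_i) -> f =1 g.
Proof.
move=> eq_fgX p; apply/congr_mod0/mpoly_rmorph_congr_mod => i.
by rewrite eq_fgX; apply: congr_modxx.
Qed.

End MPolyRMorph.

Lemma comp_mpolyX_tnth (K : comNzRingType) n k (lq : n.-tuple {mpoly K[k]}) i :
  comp_mpoly lq 'X_i = tnth lq i.
Proof. by rewrite comp_mpolyXU -tnth_nth. Qed.

Lemma comp_mpoly_endo_comp (K : comNzRingType) N (e psi : endo K N) :
  comp_mpoly (endo_comp e psi) =1 comp_mpoly e \o comp_mpoly psi.
Proof.
apply: mpoly_rmorph_eq => [c|i] /=; first by rewrite !comp_mpolyC.
by rewrite !comp_mpolyX_tnth tnth_mktuple.
Qed.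

Lemma comp_mpoly_cancel (K : comNzRingType) N (e e' : endo K N) :
  (forall i, comp_mpoly e' (tnth e i) = 'X_i) -> cancel (comp_mpoly e) (comp_mpoly e').
Proof.
move=> e'eK.
apply: (mpoly_rmorph_eq (f := comp_mpoly e' \o comp_mpoly e) (g := idfun)) => [c|i] /=.
  by rewrite !comp_mpolyC.
by rewrite comp_mpolyX_tnth e'eK.
Qed.

Lemma comp_mpoly_indep (K : comNzRingType) N (t : endo K N) (i : 'I_N)
    (f : {mpoly K[N]}) :
  (forall m, m \in msupp f -> m i = 0%N) ->
  (forall j, j != i -> tnth t j = 'X_j) -> comp_mpoly t f = f.
Proof.
move=> f_indep tX; rewrite comp_mpolyE [RHS]mpolyE.
apply: eq_big_seq => m /f_indep mi0; congr (_ *: _); rewrite mpolyXE_id.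
by apply: eq_bigr => j _; case: (eqVneq j i) => [->|/tX ->]; rewrite ?mi0.
Qed.

Lemma elementary_cancel (K : comNzRingType) N (e : endo K N) :
  elementary e -> exists e' : endo K N, cancel (comp_mpoly e) (comp_mpoly e').
Proof.
move=> [i [f [f_indep eE]]].
pose e' : endo K N := [tuple if j == i then 'X_i - f else 'X_j | j < N].
exists e'; apply: comp_mpoly_cancel => j; rewrite eE.
have e'E k : tnth e' k = if k == i then 'X_i - f else 'X_k by rewrite tnth_mktuple.
case: (eqVneq j i) => [->|nji]; last by rewrite comp_mpolyX_tnth e'E (negbTE nji).
have e'f : comp_mpoly e' f = f.
  by apply: (comp_mpoly_indep f_indep) => k nki; rewrite e'E (negbTE nki).
by rewrite comp_mpolyD e'f comp_mpolyX_tnth e'E eqxx subrK.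
Qed.

Lemma linear_aut_cancel (K : comUnitRingType) N (e : endo K N) :
  linear_aut e -> exists e' : endo K N, cancel (comp_mpoly e) (comp_mpoly e').
Proof.
move=> [A [A_unit eE]].
exists [tuple \sum_(j < N) invmx A i j *: 'X_j | i < N].
apply: comp_mpoly_cancel => i; rewrite eE linear_sum /=.
under eq_bigr => j _ do rewrite comp_mpolyZ comp_mpolyX_tnth tnth_mktuple scaler_sumr.
rewrite exchange_big /=.
rewrite (eq_bigr (fun k => (A *m invmx A) i k *: 'X_k)) => [|k _]; last first.
  by rewrite mxE scaler_suml; under eq_bigr => j _ do rewrite scalerA.
rewrite mulmxV // (bigD1 i) //= big1 ?addr0 => [|k nki]; first by rewrite mxE eqxx scale1r.
by rewrite mxE eq_sym (negbTE nki) scale0r.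
Qed.

Lemma tame_cancel (K : comUnitRingType) N (phi : endo K N) :
  tame phi -> exists psi : endo K N, cancel (comp_mpoly phi) (comp_mpoly psi).
Proof.
have endo_comp_cancel (e e' phi' psi : endo K N) :
    cancel (comp_mpoly e) (comp_mpoly e') -> cancel (comp_mpoly phi') (comp_mpoly psi) ->
    cancel (comp_mpoly (endo_comp e phi')) (comp_mpoly (endo_comp psi e')).
  by move=> eK phiK p; rewrite !comp_mpoly_endo_comp /= eK phiK.
elim=> [|e phi' /elementary_cancel [e' eK] _ [psi phiK]
         |e phi' /linear_aut_cancel [e' eK] _ [psi phiK]].
- by exists (endo_id K N) => p; rewrite !comp_mpoly_id.
- by exists (endo_comp psi e'); apply: endo_comp_cancel.
- by exists (endo_comp psi e'); apply: endo_comp_cancel.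
Qed.

Lemma lift_max (n : nat) (k : 'I_n) : lift ord_max k = widen_ord (leqnSn n) k.
Proof. by apply: val_inj; rewrite /= /bump leqNgt ltn_ord. Qed.

Section Muni.
Variables (K : comNzRingType) (n : nat).

Lemma muniX_widen (k : 'I_n) :
  muni ('X_(widen_ord (leqnSn n) k) : {mpoly K[n.+1]}) = ('X_k)%:P.
Proof.
rewrite /muni mmapX mmap1U /=; case: splitP => [j eq_jk|j].
  by congr ('X__)%:P; apply/val_inj; rewrite /= -eq_jk.
by rewrite ord1 /= addn0 => /eqP; rewrite ltn_eqF.
Qed.

Lemma muniX_max : muni ('X_ord_max : {mpoly K[n.+1]}) = 'X.
Proof.
rewrite /muni mmapX mmap1U /=; case: splitP => //; case=> j lt_jn /eqP /=.
by rewrite eq_sym (ltn_eqF lt_jn).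
Qed.

Lemma muni_mwiden (p : {mpoly K[n]}) : muni (mwiden p) = p%:P.
Proof.
apply: (mpoly_rmorph_eq (f := @muni n K \o @mwiden n K) (g := polyC)) => [c|k] /=.
  by rewrite mwidenC muniC.
by rewrite mwidenX mnmwiden1 muniX_widen.
Qed.

Lemma size_muni_comp_mpoly_leq1 (psi : endo K n.+1) :
  (forall j, size (muni (tnth psi j)) <= 1)%N ->
  forall Q, (size (muni (comp_mpoly psi Q)) <= 1)%N.
Proof.
move=> psi_le1 Q; pose a := [tuple (muni (tnth psi j))`_0 | j < n.+1].
suff -> : muni (comp_mpoly psi Q) = (comp_mpoly a Q)%:P by apply: size_polyC_leq1.
apply: (mpoly_rmorph_eq (f := @muni n K \o comp_mpoly psi) (g := polyC \o comp_mpoly a)).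
  by move=> c /=; rewrite !comp_mpolyC muniC.
by move=> j /=; rewrite !comp_mpolyX_tnth tnth_mktuple; apply/size1_polyC/psi_le1.
Qed.

Lemma nonconst_comp_mpoly_shift (psi : endo K n.+1) :
  (exists j, 1 < size (muni (tnth psi j)))%N ->
  exists q, (1 < size (muni (comp_mpoly psi ('X_ord_max - mwiden q))))%N.
Proof.
move=> [j nonconst_j].
case/orP: (leqVgt (size (muni (tnth psi ord_max))) 1) => [const_max|nonconst_max]; last first.
  by exists 0; rewrite mwiden0 subr0 comp_mpolyX_tnth.
case: (unliftP ord_max j) => [k eq_jk|eq_j_max]; last first.
  by rewrite eq_j_max ltnNge const_max in nonconst_j.
exists 'X_k; rewrite mwidenX mnmwiden1 -lift_max -eq_jk comp_mpolyB !comp_mpolyX_tnth.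
rewrite muniB addrC size_polyDl size_polyN //.
exact: leq_ltn_trans const_max nonconst_j.
Qed.

End Muni.

Lemma nonconst_mul_eq_polyC (A : idomainType) (a b : {poly A}) (c : A) :
  (1 < size a)%N -> a * b = c%:P -> c = 0.
Proof.
move=> nonconst_a; have [-> /esym/eqP|nz_b ab_c] := eqVneq b 0.
  by rewrite mulr0 polyC_eq0 => /eqP.
have nz_a : a != 0 by rewrite -size_poly_gt0 (ltn_trans _ nonconst_a).
have := size_polyC_leq1 c; rewrite -ab_c size_mul //.
rewrite -size_poly_gt0 in nz_b; case: (size b) nz_b => // k _.
by rewrite addnS /= => /(leq_trans (leq_addr k _)); rewrite leqNgt nonconst_a.
Qed.

Lemma restrict_qE (K : comNzRingType) n (phi : endo K n.+1) (q : {mpoly K[n]}) :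
  comp_mpoly (restrict_q phi q)
  =1 comp_mpoly (subst_last q) \o comp_mpoly phi \o @mwiden n K.
Proof.
apply: mpoly_rmorph_eq => [c|i] /=; first by rewrite mwidenC !comp_mpolyC.
by rewrite mwidenX mnmwiden1 !comp_mpolyX_tnth tnth_mktuple.
Qed.

Lemma subst_last_congr_mod (K : comNzRingType) n (q : {mpoly K[n]}) Q :
  congr_mod ('X_ord_max - mwiden q) Q (mwiden (comp_mpoly (subst_last q) Q)).
Proof.
apply: (mpoly_rmorph_congr_mod (f := idfun) (g := @mwiden n K \o comp_mpoly (subst_last q))).
  by move=> c /=; rewrite comp_mpolyC mwidenC.
move=> j /=; rewrite comp_mpolyX_tnth tnth_mktuple; case: unliftP => [k ->|->].
  by rewrite mwidenX mnmwiden1 lift_max; apply: congr_modxx.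
by exists 1; rewrite mul1r.
Qed.

Lemma restrict_q_injective (K : idomainType) n (phi psi : endo K n.+1) :
  cancel (comp_mpoly phi) (comp_mpoly psi) ->
  exists q, injective (comp_mpoly (restrict_q phi q)).
Proof.
move=> phiK.
have [q nonconst_d] : exists q, (1 < size (muni (comp_mpoly psi ('X_ord_max - mwiden q))))%N.
  apply: nonconst_comp_mpoly_shift.
  case: (pickP (fun j => 1 < size (muni (tnth psi j)))%N) => [j ? | psi_gt1].
    by exists j.
  have psi_le1 j : (size (muni (tnth psi j)) <= 1)%N by rewrite leqNgt psi_gt1.
  have := size_muni_comp_mpoly_leq1 psi_le1 (comp_mpoly phi 'X_ord_max).
  by rewrite phiK muniX_max size_polyX.
exists q => p1 p2 eq_p; apply/eqP; rewrite -subr_eq0; apply/eqP.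
have phi_q_p : comp_mpoly (subst_last q) (comp_mpoly phi (mwiden (p1 - p2))) = 0.
  by have /= <- := restrict_qE phi q (p1 - p2); rewrite rmorphB /= eq_p subrr.
have [r phi_p] := subst_last_congr_mod q (comp_mpoly phi (mwiden (p1 - p2))).
rewrite phi_q_p mwiden0 subr0 in phi_p.
apply: (nonconst_mul_eq_polyC nonconst_d (b := muni (comp_mpoly psi r))).
rewrite -muni_mwiden -[mwiden (p1 - p2)]phiK phi_p (rmorphM (comp_mpoly psi)).
by rewrite muniM [RHS]mulrC.
Qed.

Theorem proposition2p4p1 (R : realType) (n : nat) (hn : (0 < n)%N)
  (phi : endo (complex R) n.+1) (hphi : tame phi) :
  exists q : {mpoly (complex R)[n]},
    injective (fun p : {mpoly (complex R)[n]} => comp_mpoly (restrict_q phi q) p).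
Proof.
have [psi phiK] := tame_cancel hphi.
exact: restrict_q_injective phiK.
Qed.
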